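(* Let $\mathfrak{n}$ be the real $7$-dimensional Lie algebra with basis $e_1,\dots,e_7$ whose nonzero brackets (up to antisymmetry) are $[e_1,e_2]=e_5$, $[e_1,e_3]=e_7$, $[e_1,e_5]=e_6$, $[e_2,e_4]=e_7$, $[e_2,e_5]=e_7$. Then $\mathfrak{n}$ is an Einstein nilradical.
   Context: A real nilpotent Lie algebra $\mathfrak{n}$ is called an Einstein nilradical if it admits an inner product such that the left-invariant Riemannian metric it defines on the simply connected nilpotent Lie group with Lie algebra $\mathfrak{n}$ is a nilsoliton, i.e. its Ricci operator satisfies $\mathrm{Ric}=c\,\mathrm{Id}+D$ for some $c\in\mathbb{R}$ and some derivation $D$ of $\mathfrak{n}$. Brackets of basis elements not listed are zero. *)

From mathcomp Require Import all_boot all_order all_algebra.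
From mathcomp Require Import reals.
Set Implicit Arguments. Unset Strict Implicit. Unset Printing Implicit Defensive.
Import Order.TTheory GRing.Theory Num.Theory.
Local Open Scope ring_scope.

Definition ev {R : realFieldType} {n : nat} (k : 'I_n) : 'cV[R]_n := delta_mx k 0.

Definition br_of_basis (R : realFieldType) (n : nat)
  (bb : 'I_n -> 'I_n -> 'cV[R]_n) (x y : 'cV[R]_n) : 'cV[R]_n :=
  \sum_(i < n) \sum_(j < n) (x i 0 * y j 0) *: bb i j.

Definition is_lie_bracket (R : realFieldType) (n : nat)
  (br : 'cV[R]_n -> 'cV[R]_n -> 'cV[R]_n) : Prop :=
  (forall a x y z, br (a *: x + y) z = a *: br x z + br y z) /\
  (forall a x y z, br z (a *: x + y) = a *: br z x + br z y) /\
  (forall x, br x x = 0) /\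
  (forall x y z, br x (br y z) + br y (br z x) + br z (br x y) = 0).

(* nilpotent: all right-normed brackets [x1,[x2,...,[xk,y]]] of length k+1
   vanish for some k, i.e. the lower central series reaches 0 *)
Definition is_nilpotent (R : realFieldType) (n : nat)
  (br : 'cV[R]_n -> 'cV[R]_n -> 'cV[R]_n) : Prop :=
  exists k : nat, forall (s : seq 'cV[R]_n) (y : 'cV[R]_n),
    size s = k -> foldr br y s = 0.

Definition ipG (R : realFieldType) (n : nat) (G : 'M[R]_n) (x y : 'cV[R]_n) : R :=
  (x^T *m G *m y) 0 0.

Definition is_inner_product (R : realFieldType) (n : nat) (G : 'M[R]_n) : Prop :=
  G^T = G /\ forall x : 'cV[R]_n, x != 0 -> 0 < ipG G x x.

(* Levi-Civita connection of the left-invariant metric, via the Koszul formula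
   2<nabla_X Y, Z> = <[X,Y],Z> - <[Y,Z],X> + <[Z,X],Y>. *)
Definition lc_conn (R : realFieldType) (n : nat)
  (br : 'cV[R]_n -> 'cV[R]_n -> 'cV[R]_n) (G : 'M[R]_n) (x y : 'cV[R]_n)
  : 'cV[R]_n :=
  invmx G *m \col_(k < n)
    (2^-1 * (ipG G (br x y) (ev k) - ipG G (br y (ev k)) x
             + ipG G (br (ev k) x) y)).

Definition curv (R : realFieldType) (n : nat)
  (br : 'cV[R]_n -> 'cV[R]_n -> 'cV[R]_n) (G : 'M[R]_n) (x y z : 'cV[R]_n)
  : 'cV[R]_n :=
  lc_conn br G x (lc_conn br G y z) - lc_conn br G y (lc_conn br G x z)
  - lc_conn br G (br x y) z.

Definition ricci_form (R : realFieldType) (n : nat)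
  (br : 'cV[R]_n -> 'cV[R]_n -> 'cV[R]_n) (G : 'M[R]_n) (x y : 'cV[R]_n) : R :=
  \sum_(k < n) (curv br G (ev k) x y) k 0.

(* Ricci operator: <Ric X, Y> = ric(X, Y) *)
Definition ricci_op (R : realFieldType) (n : nat)
  (br : 'cV[R]_n -> 'cV[R]_n -> 'cV[R]_n) (G : 'M[R]_n) (x : 'cV[R]_n)
  : 'cV[R]_n :=
  invmx G *m \col_(j < n) ricci_form br G x (ev j).

Definition is_derivation (R : realFieldType) (n : nat)
  (br : 'cV[R]_n -> 'cV[R]_n -> 'cV[R]_n) (D : 'M[R]_n) : Prop :=
  forall x y, D *m br x y = br (D *m x) y + br x (D *m y).

Definition is_nilsoliton (R : realFieldType) (n : nat)
  (br : 'cV[R]_n -> 'cV[R]_n -> 'cV[R]_n) (G : 'M[R]_n) : Prop :=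
  exists (c : R) (D : 'M[R]_n), is_derivation br D /\
    forall x, ricci_op br G x = c *: x + D *m x.

Definition einstein_nilradical (R : realFieldType) (n : nat)
  (br : 'cV[R]_n -> 'cV[R]_n -> 'cV[R]_n) : Prop :=
  is_lie_bracket br /\ is_nilpotent br /\
  exists G : 'M[R]_n, is_inner_product G /\ is_nilsoliton br G.

(* The 7-dimensional algebra: e_1..e_7 are ev 0 .. ev 6.
   [e1,e2]=e5, [e1,e3]=e7, [e1,e5]=e6, [e2,e4]=e7, [e2,e5]=e7. *)
Definition n7_bb (R : realFieldType) (i j : 'I_7) : 'cV[R]_7 :=
  let e := fun k : nat => ev (inord k : 'I_7) in
  match nat_of_ord i, nat_of_ord j with
  | 0, 1 => e 4%N | 1, 0 => - e 4%N
  | 0, 2 => e 6%N | 2, 0 => - e 6%N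
  | 0, 4 => e 5%N | 4, 0 => - e 5%N
  | 1, 3 => e 6%N | 3, 1 => - e 6%N
  | 1, 4 => e 6%N | 4, 1 => - e 6%N
  | _, _ => 0
  end.

Definition n7_br (R : realFieldType) : 'cV[R]_7 -> 'cV[R]_7 -> 'cV[R]_7 :=
  br_of_basis (@n7_bb R).

From mathcomp Require Import all_boot all_order all_algebra.
From mathcomp Require Import reals.
From mathcomp Require Import ring lra.
Set Implicit Arguments. Unset Strict Implicit. Unset Printing Implicit Defensive.
Import Order.TTheory GRing.Theory Num.Theory.
Local Open Scope ring_scope.

(* Take the inner product whose Gram matrix in the basis e_1, ..., e_7 is
   diag(1, 1, 12, *, *, 12, 12), with block [[4, 2], [2, 4]] on (e_4, e_5).
   The Koszul formula gives the Levi-Civita connection, and from it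
   Ric = diag(-9/2, -4, -1/2, -1, -1, 2, 5/2) = -15/2 Id + D with
   D = diag(3, 7/2, 7, 13/2, 13/2, 19/2, 10).  D is a derivation because its
   eigenvalues add up along the brackets (3 + 7/2 = 13/2, 3 + 7 = 10,
   3 + 13/2 = 19/2, 7/2 + 13/2 = 10).  As D is scalar on span(e_4, e_5), the
   metric is free to mix e_4 and e_5; a diagonal metric cannot work, since
   [e_2, e_4] and [e_2, e_5] both equal e_7 and make Ric(e_4, e_5) nonzero. *)

Notation o0 := (@Ordinal 7 0 isT).
Notation o1 := (@Ordinal 7 1 isT).
Notation o2 := (@Ordinal 7 2 isT).
Notation o3 := (@Ordinal 7 3 isT).
Notation o4 := (@Ordinal 7 4 isT).
Notation o5 := (@Ordinal 7 5 isT).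
Notation o6 := (@Ordinal 7 6 isT).

Lemma ord7P (P : 'I_7 -> Prop) :
  P o0 -> P o1 -> P o2 -> P o3 -> P o4 -> P o5 -> P o6 -> forall k, P k.
Proof.
move=> P0 P1 P2 P3 P4 P5 P6 [[|[|[|[|[|[|[|k]]]]]]] lt_k7];
  by rewrite ?(bool_irrelevance lt_k7 isT).
Qed.

Lemma big_ord7 (V : nmodType) (F : 'I_7 -> V) :
  \sum_(k < 7) F k = F o0 + F o1 + F o2 + F o3 + F o4 + F o5 + F o6.
Proof.
rewrite !big_ord_recr big_ord0 /= add0r.
by congr (_ + _ + _ + _ + _ + _ + _); apply: congr1; apply: val_inj.
Qed.

Section Coordinates.
Variable R : nzRingType.

Definition mk7 (a0 a1 a2 a3 a4 a5 a6 : R) : 'cV[R]_7 :=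
  \col_(k < 7) nth 0 [:: a0; a1; a2; a3; a4; a5; a6] k.

Lemma mk7E a0 a1 a2 a3 a4 a5 a6 k j :
  mk7 a0 a1 a2 a3 a4 a5 a6 k j = nth 0 [:: a0; a1; a2; a3; a4; a5; a6] k.
Proof. by rewrite mxE. Qed.

Lemma col7 (f : 'I_7 -> R) :
  \col_(k < 7) f k = mk7 (f o0) (f o1) (f o2) (f o3) (f o4) (f o5) (f o6).
Proof. by apply/matrixP => i j; rewrite !mxE; move: i; apply: ord7P. Qed.

Lemma mk7_ind (P : 'cV[R]_7 -> Prop) :
  (forall a0 a1 a2 a3 a4 a5 a6, P (mk7 a0 a1 a2 a3 a4 a5 a6)) -> forall x, P x.
Proof.
move=> Pmk7 x; suff -> : x = \col_k x k 0 by rewrite col7.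
by apply/matrixP => i j; rewrite mxE ord1.
Qed.

Lemma mk7_0 : (0 : 'cV[R]_7) = mk7 0 0 0 0 0 0 0.
Proof. by apply/matrixP => i j; rewrite !mxE; move: i; apply: ord7P. Qed.

Lemma mk7D a0 a1 a2 a3 a4 a5 a6 b0 b1 b2 b3 b4 b5 b6 :
  mk7 a0 a1 a2 a3 a4 a5 a6 + mk7 b0 b1 b2 b3 b4 b5 b6 =
  mk7 (a0 + b0) (a1 + b1) (a2 + b2) (a3 + b3) (a4 + b4) (a5 + b5) (a6 + b6).
Proof. by apply/matrixP => i j; rewrite !mxE; move: i; apply: ord7P. Qed.

Lemma mk7N a0 a1 a2 a3 a4 a5 a6 :
  - mk7 a0 a1 a2 a3 a4 a5 a6 = mk7 (- a0) (- a1) (- a2) (- a3) (- a4) (- a5) (- a6).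
Proof. by apply/matrixP => i j; rewrite !mxE; move: i; apply: ord7P. Qed.

Lemma mk7B a0 a1 a2 a3 a4 a5 a6 b0 b1 b2 b3 b4 b5 b6 :
  mk7 a0 a1 a2 a3 a4 a5 a6 - mk7 b0 b1 b2 b3 b4 b5 b6 =
  mk7 (a0 - b0) (a1 - b1) (a2 - b2) (a3 - b3) (a4 - b4) (a5 - b5) (a6 - b6).
Proof. by rewrite mk7N mk7D. Qed.

Lemma mk7Z c a0 a1 a2 a3 a4 a5 a6 :
  c *: mk7 a0 a1 a2 a3 a4 a5 a6 =
  mk7 (c * a0) (c * a1) (c * a2) (c * a3) (c * a4) (c * a5) (c * a6).
Proof. by apply/matrixP => i j; rewrite !mxE; move: i; apply: ord7P. Qed.

Lemma mul_mx_mk7 (A : 'M[R]_7) a0 a1 a2 a3 a4 a5 a6 :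
  A *m mk7 a0 a1 a2 a3 a4 a5 a6 = \col_i (A i o0 * a0 + A i o1 * a1 + A i o2 * a2
    + A i o3 * a3 + A i o4 * a4 + A i o5 * a5 + A i o6 * a6).
Proof. by apply/matrixP => i j; rewrite !mxE big_ord7 !mxE. Qed.

End Coordinates.

Section BasisBracket.
Variables (R : realFieldType) (n : nat) (bb : 'I_n -> 'I_n -> 'cV[R]_n).

Lemma br_of_basisDl a x y z :
  br_of_basis bb (a *: x + y) z = a *: br_of_basis bb x z + br_of_basis bb y z.
Proof.
rewrite /br_of_basis scaler_sumr -big_split; apply: eq_bigr => i _.
rewrite scaler_sumr -big_split; apply: eq_bigr => j _.
by rewrite !mxE mulrDl scalerDl scalerA mulrA.
Qed.

Lemma br_of_basisDr a x y z :
  br_of_basis bb z (a *: x + y) = a *: br_of_basis bb z x + br_of_basis bb z y.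
Proof.
rewrite /br_of_basis scaler_sumr -big_split; apply: eq_bigr => i _.
rewrite scaler_sumr -big_split; apply: eq_bigr => j _.
by rewrite !mxE mulrDr scalerDl scalerA mulrCA.
Qed.

Lemma br_of_basis_alt :
  (forall i j, bb j i = - bb i j) -> forall x, br_of_basis bb x x = 0.
Proof.
move=> bb_anti x; set S := br_of_basis bb x x.
have S_opp : S = - S.
  rewrite {1}/S /br_of_basis exchange_big -sumrN; apply: eq_bigr => i _.
  rewrite -sumrN; apply: eq_bigr => j _.
  by rewrite bb_anti scalerN mulrC.
have : 2%:R *: S = 0 by rewrite scaler_nat mulr2n {2}S_opp subrr.
by move/eqP; rewrite scaler_eq0 pnatr_eq0 => /eqP.
Qed.

End BasisBracket.

Section N7.
Variable R : realFieldType.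

Lemma evE (i : 'I_7) : ev i = \col_(k < 7) (k == i :> nat)%:R :> 'cV[R]_7.
Proof. by apply/matrixP => k j; rewrite !mxE ord1 eqxx andbT. Qed.

Lemma n7_bb_anti (i j : 'I_7) : @n7_bb R j i = - @n7_bb R i j.
Proof. by move: i; apply: ord7P; move: j; apply: ord7P; rewrite /= ?oppr0 ?opprK. Qed.

Lemma n7_brE a0 a1 a2 a3 a4 a5 a6 b0 b1 b2 b3 b4 b5 b6 :
  n7_br (mk7 a0 a1 a2 a3 a4 a5 a6) (mk7 b0 b1 b2 b3 b4 b5 b6) =
  mk7 0 0 0 0 (a0 * b1 - a1 * b0) (a0 * b4 - a4 * b0)
      (a0 * b2 - a2 * b0 + a1 * b3 - a3 * b1 + a1 * b4 - a4 * b1) :> 'cV[R]_7.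
Proof.
rewrite /n7_br /br_of_basis !big_ord7 !mk7E /= /n7_bb /= !evE !col7 /= !inordK //=.
rewrite ?mk7N ?scaler0 ?addr0 ?add0r !mk7Z !mk7D.
by congr mk7; ring.
Qed.

Lemma n7_jacobi (x y z : 'cV[R]_7) :
  n7_br x (n7_br y z) + n7_br y (n7_br z x) + n7_br z (n7_br x y) = 0.
Proof.
elim/mk7_ind: x => x0 x1 x2 x3 x4 x5 x6; elim/mk7_ind: y => y0 y1 y2 y3 y4 y5 y6.
elim/mk7_ind: z => z0 z1 z2 z3 z4 z5 z6.
by rewrite !n7_brE !mk7D mk7_0; congr mk7; ring.
Qed.

Lemma n7_lie_bracket : is_lie_bracket (@n7_br R).
Proof.
split; first exact: br_of_basisDl.
split; first exact: br_of_basisDr.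
split; [exact/br_of_basis_alt/n7_bb_anti | exact: n7_jacobi].
Qed.

Lemma n7_br3 (x y z w : 'cV[R]_7) : n7_br x (n7_br y (n7_br z w)) = 0.
Proof.
elim/mk7_ind: x => x0 x1 x2 x3 x4 x5 x6; elim/mk7_ind: y => y0 y1 y2 y3 y4 y5 y6.
elim/mk7_ind: z => z0 z1 z2 z3 z4 z5 z6; elim/mk7_ind: w => w0 w1 w2 w3 w4 w5 w6.
by rewrite !n7_brE mk7_0; congr mk7; ring.
Qed.

Lemma n7_nilpotent : is_nilpotent (@n7_br R).
Proof. by exists 3%N => -[|x [|y [|z []]]] w //= _; apply: n7_br3. Qed.

Definition n7_gram : 'M[R]_7 := \matrix_(i, j)
  match nat_of_ord i, nat_of_ord j with
  | 0, 0 | 1, 1 => 1 | 2, 2 | 5, 5 | 6, 6 => 12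
  | 3, 3 | 4, 4 => 4 | 3, 4 | 4, 3 => 2 | _, _ => 0 end.

Definition n7_gram_inv : 'M[R]_7 := \matrix_(i, j)
  match nat_of_ord i, nat_of_ord j with
  | 0, 0 | 1, 1 => 1 | 2, 2 | 5, 5 | 6, 6 => 12^-1
  | 3, 3 | 4, 4 => 3^-1 | 3, 4 | 4, 3 => - 6^-1 | _, _ => 0 end.

Lemma n7_gram_mulV : n7_gram *m n7_gram_inv = 1%:M.
Proof.
apply/matrixP => i j; rewrite !mxE big_ord7 !mxE.
by move: i; apply: ord7P; move: j; apply: ord7P; rewrite /=; field; rewrite ?pnatr_eq0.
Qed.

Lemma invmx_n7_gram : invmx n7_gram = n7_gram_inv.
Proof.
have [unit_gram _] := mulmx1_unit n7_gram_mulV.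
by rewrite -[RHS]mul1mx -(mulVmx unit_gram) -mulmxA n7_gram_mulV mulmx1.
Qed.

Lemma n7_gram_invE a0 a1 a2 a3 a4 a5 a6 :
  n7_gram_inv *m mk7 a0 a1 a2 a3 a4 a5 a6 =
  mk7 a0 a1 (a2 / 12) ((2 * a3 - a4) / 6) ((2 * a4 - a3) / 6) (a5 / 12) (a6 / 12).
Proof. by rewrite mul_mx_mk7 col7 !mxE /=; congr mk7; field. Qed.

Lemma n7_ipE a0 a1 a2 a3 a4 a5 a6 b0 b1 b2 b3 b4 b5 b6 :
  ipG n7_gram (mk7 a0 a1 a2 a3 a4 a5 a6) (mk7 b0 b1 b2 b3 b4 b5 b6) =
  a0 * b0 + a1 * b1 + 12 * a2 * b2 + 4 * a3 * b3 + 2 * a3 * b4 + 2 * a4 * b3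
  + 4 * a4 * b4 + 12 * a5 * b5 + 12 * a6 * b6.
Proof. by rewrite /ipG !mxE !big_ord7 !mxE !big_ord7 !mxE /=; ring. Qed.

Lemma n7_inner_product : is_inner_product n7_gram.
Proof.
split.
  by apply/matrixP => i j; rewrite !mxE; move: i; apply: ord7P; move: j; apply: ord7P.
elim/mk7_ind => x0 x1 x2 x3 x4 x5 x6 x_neq0; rewrite n7_ipE.
have -> : x0 * x0 + x1 * x1 + 12 * x2 * x2 + 4 * x3 * x3 + 2 * x3 * x4 + 2 * x4 * x3
    + 4 * x4 * x4 + 12 * x5 * x5 + 12 * x6 * x6 = x0 ^+ 2 + x1 ^+ 2 + 12 * x2 ^+ 2
    + 3 * x3 ^+ 2 + (x3 + 2 * x4) ^+ 2 + 12 * x5 ^+ 2 + 12 * x6 ^+ 2 by ring.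
rewrite ltNge; apply: contra x_neq0 => form_le0.
have sqr0 (t : R) : t ^+ 2 <= 0 -> t = 0.
  by move=> t2_le0; apply/eqP; rewrite -sqrf_eq0 eq_le t2_le0 sqr_ge0.
have := sqr_ge0 x0; have := sqr_ge0 x1; have := sqr_ge0 x2; have := sqr_ge0 x3.
have := sqr_ge0 (x3 + 2 * x4); have := sqr_ge0 x5; have := sqr_ge0 x6; move=> *.
have x0_0 : x0 = 0 by apply: sqr0; lra.
have x1_0 : x1 = 0 by apply: sqr0; lra.
have x2_0 : x2 = 0 by apply: sqr0; lra.
have x3_0 : x3 = 0 by apply: sqr0; lra.
have x5_0 : x5 = 0 by apply: sqr0; lra.
have x6_0 : x6 = 0 by apply: sqr0; lra.
have x34_0 : x3 + 2 * x4 = 0 by apply: sqr0; lra.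
have x4_0 : x4 = 0 by lra.
by rewrite x0_0 x1_0 x2_0 x3_0 x4_0 x5_0 x6_0 -mk7_0.
Qed.

Lemma n7_connE a0 a1 a2 a3 a4 a5 a6 b0 b1 b2 b3 b4 b5 b6 :
  lc_conn (@n7_br R) n7_gram (mk7 a0 a1 a2 a3 a4 a5 a6) (mk7 b0 b1 b2 b3 b4 b5 b6) =
  mk7 (a1*b3 + 2*a1*b4 + 6*a2*b6 + a3*b1 + 2*a4*b1 + 6*a4*b5 + 6*a5*b4 + 6*a6*b2)
      (- a0*b3 - 2*a0*b4 - a3*b0 + 6*a3*b6 - 2*a4*b0 + 6*a4*b6 + 6*a6*b3 + 6*a6*b4)
      (- (a0*b6 + a6*b0) / 2)
      (a0*b5 - a1*b6 + a5*b0 - a6*b1)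
      ((a0*b1 - a1*b0) / 2 - 2*a0*b5 - a1*b6 - 2*a5*b0 - a6*b1)
      ((a0*b4 - a4*b0) / 2)
      ((a0*b2 + a1*b3 + a1*b4 - a2*b0 - a3*b1 - a4*b1) / 2).
Proof.
rewrite /lc_conn invmx_n7_gram col7 !evE !col7 !n7_brE !n7_ipE n7_gram_invE.
by rewrite /= ?mulr0n ?mulr1n; congr mk7; field; rewrite ?pnatr_eq0.
Qed.

Lemma n7_ricci_formE x0 x1 x2 x3 x4 x5 x6 y0 y1 y2 y3 y4 y5 y6 :
  ricci_form (@n7_br R) n7_gram (mk7 x0 x1 x2 x3 x4 x5 x6) (mk7 y0 y1 y2 y3 y4 y5 y6) =
  - 9/2 * x0*y0 - 4*x1*y1 - 6*x2*y2 - 4*x3*y3 - 2*x3*y4 - 2*x4*y3 - 4*x4*y4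
  + 24*x5*y5 + 30*x6*y6.
Proof.
rewrite /ricci_form /curv big_ord7 !evE !col7 /= ?mulr0n ?mulr1n.
rewrite !n7_brE !n7_connE !mk7B !mk7E /=.
by field; rewrite ?pnatr_eq0.
Qed.

Lemma n7_ricci_opE x0 x1 x2 x3 x4 x5 x6 :
  ricci_op (@n7_br R) n7_gram (mk7 x0 x1 x2 x3 x4 x5 x6) =
  mk7 (- 9/2 * x0) (- 4 * x1) (- x2 / 2) (- x3) (- x4) (2 * x5) (5/2 * x6).
Proof.
rewrite /ricci_op invmx_n7_gram col7 !evE !col7 /= ?mulr0n ?mulr1n.
by rewrite !n7_ricci_formE n7_gram_invE; congr mk7; field; rewrite ?pnatr_eq0.
Qed.

Definition n7_der : 'M[R]_7 := diag_mx (mk7 3 (7/2) 7 (13/2) (13/2) (19/2) 10)^T.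

Lemma n7_derE a0 a1 a2 a3 a4 a5 a6 :
  n7_der *m mk7 a0 a1 a2 a3 a4 a5 a6 =
  mk7 (3 * a0) (7/2 * a1) (7 * a2) (13/2 * a3) (13/2 * a4) (19/2 * a5) (10 * a6).
Proof.
rewrite mul_mx_mk7 col7 !mxE /= ?mulr0n ?mulr1n.
by congr mk7; ring.
Qed.

Lemma n7_derivation : is_derivation (@n7_br R) n7_der.
Proof.
elim/mk7_ind => x0 x1 x2 x3 x4 x5 x6; elim/mk7_ind => y0 y1 y2 y3 y4 y5 y6.
by rewrite !n7_brE !n7_derE !n7_brE mk7D; congr mk7; field.
Qed.

Lemma n7_nilsoliton : is_nilsoliton (@n7_br R) n7_gram.
Proof.
exists (- 15/2), n7_der; split; first exact: n7_derivation.
elim/mk7_ind => x0 x1 x2 x3 x4 x5 x6.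
by rewrite n7_ricci_opE mk7Z n7_derE mk7D; congr mk7; field.
Qed.

End N7.

Theorem mainTheorem16 (R : realType) : einstein_nilradical (@n7_br R).
Proof.
split; first exact: n7_lie_bracket.
split; first exact: n7_nilpotent.
exists (n7_gram R); split; [exact: n7_inner_product | exact: n7_nilsoliton].
Qed.
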